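(* Let $\overrightarrow{W}$ be a Morse sequence on a simplicial complex $K$. Then for every $p$: (1) $H_p(\overline O)$ and $H_p(\widehat W)$ are isomorphic vector spaces; (2) $H^p(\underline O)$ and $H^p(\widehat W)$ are isomorphic vector spaces.
   Context: A simplicial complex $K$ is a finite collection of non-empty finite sets closed under taking non-empty subsets; $\dim\sigma=|\sigma|-1$, $K^{(p)}$ the set of $p$-simplices. A pair $(\sigma,\tau)$ with $\sigma\subsetneq\tau$ is a free pair for $K$ if $\tau$ is the only simplex other than $\sigma$ containing $\sigma$; $K$ is then an elementary expansion of $K\setminus\{\sigma,\tau\}$. If $\nu$ is a facet (maximal simplex) of $K$, $K$ is an elementary filling of $K\setminus\{\nu\}$. A Morse sequence on $K$ is a sequence $\langle\emptyset=K_0,\dots,K_k=K\rangle$ with each $K_i$ an elementary expansion or filling of $K_{i-1}$; simplices added by fillings are critical; for an expansion $K_i=K_{i-1}\cup\{\sigma,\tau\}$, $\sigma\subset\tau$, $\sigma$ is lower regular and $\tau$ upper regular. $\widehat W$ is the set of critical simplices. $K[p]$ is the $\mathbb{Z}_2$-vector space of subsets of $K^{(p)}$ (sum = symmetric difference, $0=\emptyset$), $\widehat W[p]=\{c\in K[p]:c\subseteq\widehat W\}$. For $\sigma\in K^{(p)}$, $\partial(\sigma)=\{\tau\in K^{(p-1)}:\tau\subset\sigma\}$, $\delta(\sigma)=\{\tau\in K^{(p+1)}:\sigma\subset\tau\}$, with linear extensions $\partial_p,\delta_p$. The reference map $\curlywedge$ is the unique map assigning to each $p$-simplex an element of $\widehat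 W[p]$, extended linearly, with $\curlywedge(\nu)=\{\nu\}$ for critical $\nu$ and $\curlywedge(\tau)=0=\curlywedge(\partial(\tau))$ for upper regular $\tau$; the coreference map $\curlyvee$ is the unique such map with $\curlyvee(\nu)=\{\nu\}$ for critical $\nu$ and $\curlyvee(\sigma)=0=\curlyvee(\delta(\sigma))$ for lower regular $\sigma$. Critical complex: $(\widehat W[p],\widehat\partial_p)$ with $\widehat\partial_p(c)=\curlywedge(\partial_p(c))$; cocritical complex $(\widehat W[p],\widehat\delta_p)$ with $\widehat\delta_p(c)=\curlyvee(\delta_p(c))$; $H_p(\widehat W)$ and $H^p(\widehat W)$ are their (co)homology spaces. Extension maps: $\widetilde\curlywedge_p,\widetilde\curlyvee_p:\widehat W[p]\to K[p]$ linear with $\widetilde\curlywedge(\kappa)=\{\nu\in K:\kappa\in\curlyvee(\nu)\}$, $\widetilde\curlyvee(\kappa)=\{\nu\in K:\kappa\in\curlywedge(\nu)\}$ for critical $p$-simplices $\kappa$. $\overline O[p]=\operatorname{im}\widetilde\curlywedge_p$ and $\underline O[p]=\operatorname{im}\widetilde\curlyvee_p$. The extension complex is the chain complex $(\overline O[p],\partial_p)$ and the coextension complex the cochain complex $(\underline O[p],\delta_p)$ (here $\partial_p$ maps $\overline O[p]$ into $\overline O[p-1]$ and $\delta_p$ maps $\underline O[p]$ into $\underline O[p+1]$); $H_p(\overline O)$ and $H^p(\underline O)$ denote their homology and cohomology spaces. *)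

From HB Require Import structures.
From mathcomp Require Import all_boot all_algebra.
Set Implicit Arguments. Unset Strict Implicit. Unset Printing Implicit Defensive.
Import GRing.Theory.
Local Open Scope ring_scope.

Section Morse.
Variable V : finType.

Definition is_complex (K : {set {set V}}) : Prop :=
  set0 \notin K /\
  forall s t : {set V}, s \in K -> t \subset s -> t != set0 -> t \in K.

(* Steps of a Morse sequence: an elementary filling (adding a facet nu)
   or an elementary expansion (adding a free pair (sigma, tau)). *)
Inductive step := Fill of {set V} | Exp of {set V} & {set V}.

Definition added (st : step) : {set {set V}} :=
  match st with Fill nu => [set nu] | Exp s t => [set s; t] end.

Definition Kstage (W : seq step) (i : nat) : {set {set V}} :=
  \bigcup_(st <- take i W) added st.

Definition valid_step (Kprev Knext : {set {set V}}) (st : step) : Prop :=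
  is_complex Knext /\
  match st with
  | Fill nu => nu \notin Kprev /\ Knext = nu |: Kprev /\
      (forall t, t \in Knext -> nu \subset t -> t = nu)
  | Exp s t => s \proper t /\ s \notin Kprev /\ t \notin Kprev /\
      Knext = s |: (t |: Kprev) /\
      (forall r, r \in Knext -> s \subset r -> r = s \/ r = t)
  end.

Definition morse_seq (K : {set {set V}}) (W : seq step) : Prop :=
  (forall i, (i < size W)%N ->
     valid_step (Kstage W i) (Kstage W i.+1) (nth (Fill set0) W i)) /\
  Kstage W (size W) = K.

Definition critical (W : seq step) (nu : {set V}) : bool :=
  has (fun st => if st is Fill n then n == nu else false) W.
Definition lower_regular (W : seq step) (s : {set V}) : bool :=
  has (fun st => if st is Exp s' _ then s' == s else false) W.
Definition upper_regular (W : seq step) (t : {set V}) : bool :=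
  has (fun st => if st is Exp _ t' then t' == t else false) W.

(* Chains over Z_2: a chain is a Z_2-valued function on simplices, identified
   with the set of simplices where it is 1 (sum = symmetric difference). *)
Definition chain := {ffun {set V} -> (GRing.regular ('F_2)%type)}.

Definition elem (s : {set V}) : chain := [ffun x => (x == s)%:R].

Definition bd_set (K : {set {set V}}) (s : {set V}) : {set {set V}} :=
  [set t in K | (t \proper s) && (#|t|.+1 == #|s|)].
Definition cobd_set (K : {set {set V}}) (s : {set V}) : {set {set V}} :=
  [set t in K | (s \proper t) && (#|s|.+1 == #|t|)].

Definition bd_fun (K : {set {set V}}) (c : chain) : chain :=
  [ffun t => \sum_(s in K | t \in bd_set K s) c s].
Definition cobd_fun (K : {set {set V}}) (c : chain) : chain :=
  [ffun t => \sum_(s in K | t \in cobd_set K s) c s].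

Definition linext (K : {set {set V}}) (f : {set V} -> chain) (c : chain)
  : chain := \sum_(s in K) c s *: f s.

(* critical chains of cardinality n (i.e. dimension n-1): W^[n-1] *)
Definition crit_space (K : {set {set V}}) (W : seq step) (n : nat)
  : {vspace chain} :=
  <<[seq elem s | s <- enum [set s in K | critical W s && (#|s| == n)]]>>%VS.

Definition crit_of_dim (K : {set {set V}}) (W : seq step) (n : nat)
  (c : chain) : Prop :=
  forall x, c x != 0 -> [/\ x \in K, critical W x & #|x| == n].

Definition is_reference (K : {set {set V}}) (W : seq step)
  (ref : {set V} -> chain) : Prop :=
  [/\ forall s, s \in K -> crit_of_dim K W #|s| (ref s),
      forall nu, nu \in K -> critical W nu -> ref nu = elem nu &
      forall t, t \in K -> upper_regular W t ->
        ref t = 0 /\ linext K ref (bd_fun K (elem t)) = 0].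

Definition is_coreference (K : {set {set V}}) (W : seq step)
  (cor : {set V} -> chain) : Prop :=
  [/\ forall s, s \in K -> crit_of_dim K W #|s| (cor s),
      forall nu, nu \in K -> critical W nu -> cor nu = elem nu &
      forall s, s \in K -> lower_regular W s ->
        cor s = 0 /\ linext K cor (cobd_fun K (elem s)) = 0].

Definition ext_ref (K : {set {set V}}) (cor : {set V} -> chain)
  (kappa : {set V}) : chain := [ffun nu => if nu \in K then cor nu kappa else 0].
Definition ext_coref (K : {set {set V}}) (ref : {set V} -> chain)
  (kappa : {set V}) : chain := [ffun nu => if nu \in K then ref nu kappa else 0].

(* \overline O[n-1] and \underline O[n-1] (indexed by cardinality n) *)
Definition Obar (K : {set {set V}}) (W : seq step) (cor : {set V} -> chain)
  (n : nat) : {vspace chain} :=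
  <<[seq ext_ref K cor s | s <- enum [set s in K | critical W s && (#|s| == n)]]>>%VS.
Definition Ounder (K : {set {set V}}) (W : seq step) (ref : {set V} -> chain)
  (n : nat) : {vspace chain} :=
  <<[seq ext_coref K ref s | s <- enum [set s in K | critical W s && (#|s| == n)]]>>%VS.

End Morse.

(* Isomorphism of quotient spaces U1/W1 ~ U2/W2 (with W1 <= U1, W2 <= U2):
   a linear map f sending U1 into U2 and W1 into W2 whose induced map
   U1/W1 -> U2/W2 is injective and surjective. *)
Definition quot_iso (F : fieldType) (vT : vectType F)
  (U1 W1 U2 W2 : {vspace vT}) : Prop :=
  exists f : 'Hom(vT, vT),
    [/\ (f @: U1 <= U2)%VS, (f @: W1 <= W2)%VS,
        (U1 :&: f @^-1: W2 <= W1)%VS & (U2 <= f @: U1 + W2)%VS].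

Section Homology.
Variable V : finType.
Variables (K : {set {set V}}) (W : seq (step V)).
Variables (ref cor : {set V} -> chain V).

Definition bdH : 'Hom(chain V, chain V) := linfun (bd_fun K).
Definition cobdH : 'Hom(chain V, chain V) := linfun (cobd_fun K).
Definition critbdH : 'Hom(chain V, chain V) :=
  linfun (fun c => linext K ref (bd_fun K c)).
Definition critcobdH : 'Hom(chain V, chain V) :=
  linfun (fun c => linext K cor (cobd_fun K c)).

Definition Zcrit (p : nat) := (crit_space K W p.+1 :&: lker critbdH)%VS.
Definition Bcrit (p : nat) := (critbdH @: crit_space K W p.+2)%VS.
Definition Zext (p : nat) := (Obar K W cor p.+1 :&: lker bdH)%VS.
Definition Bext (p : nat) := (bdH @: Obar K W cor p.+2)%VS.
(* cocycles / coboundaries in dimension p; the space in cardinality 0 is 0 *)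
Definition Zcocrit (p : nat) := (crit_space K W p.+1 :&: lker critcobdH)%VS.
Definition Bcocrit (p : nat) := (critcobdH @: crit_space K W p)%VS.
Definition Zcoext (p : nat) := (Ounder K W ref p.+1 :&: lker cobdH)%VS.
Definition Bcoext (p : nat) := (cobdH @: Ounder K W ref p)%VS.
End Homology.

From HB Require Import structures.
From mathcomp Require Import all_boot all_algebra.
Set Implicit Arguments. Unset Strict Implicit. Unset Printing Implicit Defensive.
Import GRing.Theory.
Local Open Scope ring_scope.

(* Write A for the linear extension of the reference map, E for the extension
   map and D for the boundary. A and E are mutually inverse between critical
   chains and the chains y supported off the lower-regular simplices whose
   boundary vanishes on them: A (E c) = c, and y - E (A y) is a chain on
   upper-regular simplices whose boundary vanishes on lower-regular ones, hence
   zero, since at the last expansion (s, t) of the Morse sequence with t in its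
   support the boundary at the free face s is exactly its coefficient at t.
   Such chains are closed under D, and A (D (E c)) = A (D c) because E c - c is
   supported on upper-regular simplices, on which A o D vanishes. Hence A maps
   the cycles and boundaries of the extension complex onto those of the critical
   complex, inducing the isomorphism in homology. Cohomology is the same argument
   for the coboundary, with lower and upper regular simplices exchanged and the
   first expansion in place of the last. *)

Lemma F2_mulrn_even (x : 'F_2) n : ~~ odd n -> x *+ n = 0.
Proof.
rewrite -dvdn2 (dvdn_pcharf (pchar_Fp (isT : prime 2))) => /eqP n0.
by rewrite -mulr_natr n0 mulr0.
Qed.

Section Chains.
Variable V : finType.
Implicit Types (K : {set {set V}}) (W : seq (step V)) (r : rel {set V})
  (f : {set V} -> chain V) (c : chain V) (s t u x : {set V}).

Definition incidence K r c : chain V := [ffun t => \sum_(s in K | r t s) c s].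

Lemma incidence_is_linear K r : linear (incidence K r).
Proof.
move=> k c d; apply/ffunP => t; rewrite !ffunE scaler_sumr -big_split.
by apply: eq_bigr => s _; rewrite !ffunE.
Qed.

Lemma linext_is_linear K f : linear (linext K f).
Proof.
move=> k c d; rewrite /linext scaler_sumr -big_split; apply: eq_bigr => s _.
by rewrite !ffunE scalerDl scalerA.
Qed.

HB.instance Definition _ K r :=
  GRing.isLinear.Build _ _ _ _ (incidence K r) (incidence_is_linear K r).
HB.instance Definition _ K f :=
  GRing.isLinear.Build _ _ _ _ (linext K f) (linext_is_linear K f).

Lemma elemE s x : elem s x = (x == s)%:R.
Proof. by rewrite ffunE. Qed.

Lemma elem_neq0 s : elem s != 0.
Proof. by apply/eqP => /ffunP /(_ s) /eqP; rewrite elemE eqxx ffunE oner_eq0. Qed.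

Lemma linextE K f c x : linext K f c x = \sum_(s in K) c s * f s x.
Proof. by rewrite /linext sum_ffunE; apply: eq_bigr => s _; rewrite ffunE. Qed.

Lemma linext_elem K f s : s \in K -> linext K f (elem s) = f s.
Proof.
move=> sK; rewrite /linext (bigD1 s) //= big1 => [|t /andP[_ ts]].
  by rewrite elemE eqxx scale1r addr0.
by rewrite elemE (negbTE ts) scale0r.
Qed.

Lemma incidence_elem K r s t : s \in K -> incidence K r (elem s) t = (r t s)%:R.
Proof.
move=> sK; rewrite ffunE (eq_bigr (fun u => (u == s)%:R)) => [|u _]; last first.
  by rewrite elemE.
case rts: (r t s); last first.
  by rewrite big1 // => u /andP[_ rtu]; case: eqP => // us; rewrite us rts in rtu.
by rewrite (bigD1 s) /= ?sK ?rts // eqxx big1 ?addr0 // => u /andP[_ /negbTE ->].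
Qed.

Lemma linext_incidence_elem K r f s : s \in K ->
  linext K f (incidence K r (elem s)) = \sum_(t in K | r t s) f t.
Proof.
move=> sK; rewrite /linext big_mkcondr; apply: eq_bigr => t _.
by rewrite incidence_elem //; case: (r t s); rewrite ?scale1r ?scale0r.
Qed.

Lemma chain_decomp K c : (forall x, c x != 0 -> x \in K) ->
  c = \sum_(s in K) c s *: elem s.
Proof.
move=> c_supp; apply/ffunP => x; rewrite sum_ffunE.
rewrite (eq_bigr (fun s => c s * (x == s)%:R)) => [|s _]; last by rewrite !ffunE.
case xK: (x \in K).
  rewrite (bigD1 x) //= eqxx mulr1 big1 ?addr0 // => s /andP[_ /negbTE].
  by rewrite eq_sym => ->; rewrite mulr0.
rewrite big1 => [|s sK]; last first.
  by case: eqP => [xs|_]; [rewrite xs sK in xK | rewrite mulr0].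
by apply/eqP; apply: contraFT xK => /c_supp.
Qed.

Lemma incidence_single K r c s t : t \in K -> r s t ->
  (forall u, u \in K -> r s u -> c u != 0 -> u = t) -> incidence K r c s = c t.
Proof.
move=> tK rst only_t; rewrite ffunE (bigD1 t) ?tK ?rst //= big1 ?addr0 //.
by move=> u /andP[/andP[uK rsu] ut]; apply/eqP; apply: contraNT ut => /only_t ->.
Qed.

Lemma incidence_sq0 K r :
  (forall u s, s \in K -> ~~ odd #|[set t in K | r u t && r t s]|) ->
  forall c, incidence K r (incidence K r c) = 0.
Proof.
move=> even_paths c; apply/ffunP => u; rewrite !ffunE.
rewrite (eq_bigr (fun t => \sum_(s in K | r t s) c s)) => [|t _]; last by rewrite ffunE.
rewrite (exchange_big_dep (mem K)) /= => [|t s _ /andP[]//].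
rewrite big1 // => s sK; rewrite (eq_bigl (mem [set t in K | r u t && r t s])).
  by rewrite sumr_const F2_mulrn_even ?even_paths.
by move=> t; rewrite !inE sK /=; case: (t \in K); case: (r u t).
Qed.

Lemma crit_spaceP K W n c : c \in crit_space K W n <-> crit_of_dim K W n c.
Proof.
set S := [set s in K | critical W s && (#|s| == n)].
split=> [cS x cx | c_crit].
  suff: x \in S by rewrite inE => /and3P[].
  apply: contraTT cx => xS; apply/negPn/eqP.
  rewrite (coord_span cS) sum_ffunE big1 // => i _.
  set X := [seq elem s | s <- enum S].
  have /mapP[s + ->] : X`_i \in X by rewrite mem_nth // size_tuple.
  rewrite ffunE elemE mem_enum => sS.
  by case: eqP => [xs|_]; [rewrite xs sS in xS | rewrite scaler0].
rewrite (@chain_decomp K c) => [|x /c_crit[]//]; apply: memv_suml => s sK.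
have [->|cs] := eqVneq (c s) 0; first by rewrite scale0r mem0v.
apply/memvZ/memv_span/map_f; rewrite mem_enum inE.
by have [-> -> ->] := c_crit s cs.
Qed.

End Chains.

Section ExtensionIsomorphism.
Variables (V : finType) (K : {set {set V}}) (W : seq (step V)).
Variables (P Q : pred {set V}) (r r' : rel {set V}) (a b : {set V} -> chain V).
(* For homology r is the boundary incidence, a the reference and b the coreference
   map, P and Q the upper and lower regular simplices; for cohomology the roles
   of bd/cobd, of a/b and of P/Q are exchanged. *)

Hypothesis r_dom : forall t s, r t s -> t \in K.
Hypothesis r'_transpose : forall t s, t \in K -> s \in K -> r' t s = r s t.
Hypothesis noncritical_cases : forall s, s \in K -> ~~ critical W s -> P s || Q s.
Hypothesis a_dim : forall s, s \in K -> crit_of_dim K W #|s| (a s).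
Hypothesis a_crit : forall s, s \in K -> critical W s -> a s = elem s.
Hypothesis a_P : forall s, s \in K -> P s ->
  a s = 0 /\ linext K a (incidence K r (elem s)) = 0.
Hypothesis b_crit : forall s, s \in K -> critical W s -> b s = elem s.
Hypothesis b_Q : forall s, s \in K -> Q s ->
  b s = 0 /\ linext K b (incidence K r' (elem s)) = 0.
Hypothesis r_sq0 : forall c, incidence K r (incidence K r c) = 0.
Hypothesis P_chain_eq0 : forall y : chain V,
  (forall x, y x != 0 -> P x) -> (forall x, Q x -> incidence K r y x = 0) -> y = 0.

Local Notation D := (incidence K r).
Local Notation A := (linext K a).
Local Notation E := (linext K (ext_ref K b)).

(* Exactly the chains fixed by [E \o A], see [extension_chainE]. *)
Definition extension_chain (y : chain V) : Prop :=
  [/\ forall x, y x != 0 -> x \in K, forall x, y x != 0 -> ~~ Q x &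
      forall x, Q x -> D y x = 0].

Lemma incidence_supp c x : D c x != 0 -> x \in K.
Proof.
rewrite ffunE; apply: contraTT => xK.
by rewrite big1 // => s /andP[_ /r_dom]; rewrite (negbTE xK).
Qed.

Lemma ref_crit_coord y x :
  extension_chain y -> x \in K -> critical W x -> A y x = y x.
Proof.
case=> _ y_Q _ xK cx; rewrite linextE (bigD1 x) //= a_crit // elemE eqxx mulr1.
rewrite big1 ?addr0 // => s /andP[sK sx].
have [-> | ys] := eqVneq (y s) 0; first by rewrite mul0r.
have [cs | /(noncritical_cases sK) /orP[ps | qs]] := boolP (critical W s).
- by rewrite a_crit // elemE eq_sym (negbTE sx) mulr0.
- by rewrite (a_P sK ps).1 ffunE mulr0.
- by have := y_Q _ ys; rewrite qs.
Qed.

Lemma ext_crit_coord d x : x \in K -> critical W x -> E d x = d x.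
Proof.
move=> xK cx; rewrite linextE (bigD1 x) //= ffunE xK b_crit // elemE eqxx mulr1.
rewrite big1 ?addr0 // => s /andP[sK sx].
by rewrite ffunE xK b_crit // elemE (negbTE sx) mulr0.
Qed.

Lemma incidence_ext_ref k x : Q x -> D (ext_ref K b k) x = 0.
Proof.
move=> qx; have [xK | xNK] := boolP (x \in K); last first.
  by apply/eqP; apply: contraNT xNK => /incidence_supp.
have sum0 : \sum_(t in K | r' t x) b t k = 0.
  have := congr1 (fun c : chain V => c k) (b_Q xK qx).2.
  by rewrite linext_incidence_elem // sum_ffunE ffunE.
rewrite ffunE -[RHS]sum0; apply: eq_big => [t | t /andP[tK _]]; last first.
  by rewrite ffunE tK.
by case tK: (t \in K); rewrite //= r'_transpose.
Qed.

Lemma extension_chain_ext d : extension_chain (E d).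
Proof.
split=> x.
- rewrite linextE; apply: contraR => xNK.
  by rewrite big1 // => s _; rewrite ffunE (negbTE xNK) mulr0.
- rewrite linextE; apply: contraTN => qx.
  rewrite big1 // => s _; rewrite ffunE; case: ifP => [xK | _]; last by rewrite mulr0.
  by rewrite (b_Q xK qx).1 ffunE mulr0.
- move=> qx; rewrite linear_sum sum_ffunE big1 // => s _.
  by rewrite linearZ ffunE incidence_ext_ref // scaler0.
Qed.

Lemma extension_chain_incidence y : extension_chain y -> extension_chain (D y).
Proof.
case=> _ _ Dy_Q; split=> x; first exact: incidence_supp.
  by apply: contra => /Dy_Q ->.
by rewrite r_sq0 ffunE.
Qed.

Lemma extension_chainB y z :
  extension_chain y -> extension_chain z -> extension_chain (y - z).
Proof.
case=> yK yQ Dy [zK zQ Dz]; split=> x.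
- rewrite !ffunE; have [y0 | /yK //] := eqVneq (y x) 0.
  by rewrite y0 sub0r oppr_eq0 => /zK.
- rewrite !ffunE; have [y0 | /yQ //] := eqVneq (y x) 0.
  by rewrite y0 sub0r oppr_eq0 => /zQ.
- move=> qx; move: (Dy x qx) (Dz x qx).
  by rewrite linearB !ffunE => -> ->; rewrite subr0.
Qed.

Lemma extension_chainE y : extension_chain y -> E (A y) = y.
Proof.
move=> ext_y; apply/esym/eqP; rewrite -subr_eq0; apply/eqP.
have [zK zQ Dz] := extension_chainB ext_y (extension_chain_ext (A y)).
apply: P_chain_eq0 => // x zx.
have xK := zK _ zx; have /negbTE qx := zQ _ zx.
suff /(noncritical_cases xK) : ~~ critical W x by rewrite qx orbF.
by apply: contra zx => cx; rewrite !ffunE ext_crit_coord // ref_crit_coord // subrr.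
Qed.

Lemma ref_extK n c : crit_of_dim K W n c -> A (E c) = c.
Proof.
move=> c_crit; apply/ffunP => x.
have [/andP[xK cx] | xNcrit] := boolP ((x \in K) && critical W x).
  by rewrite ref_crit_coord ?ext_crit_coord //; exact: extension_chain_ext.
have -> : c x = 0 by apply/eqP; apply: contraR xNcrit => /c_crit[-> ->].
rewrite linextE big1 // => s sK.
have [-> | /(a_dim sK)[xK cx _]] := eqVneq (a s x) 0; first by rewrite mulr0.
by rewrite xK cx in xNcrit.
Qed.

Lemma ref_incidence_ext n c : crit_of_dim K W n c -> A (D (E c)) = A (D c).
Proof.
move=> c_crit; apply/eqP; rewrite -subr_eq0 -!linearB; apply/eqP.
set y := E c - c.
have y_P x : y x != 0 -> x \in K /\ P x.
  have [EK EQ _] := extension_chain_ext c.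
  rewrite !ffunE; have [/andP[xK cx] | xNcrit] := boolP ((x \in K) && critical W x).
    by rewrite ext_crit_coord // subrr eqxx.
  have -> : c x = 0 by apply/eqP; apply: contraR xNcrit => /c_crit[-> ->].
  rewrite subr0 => Ecx; have xK := EK _ Ecx; split=> //.
  have := noncritical_cases xK; rewrite (negbTE (EQ _ Ecx)) orbF; apply.
  by rewrite xK in xNcrit.
rewrite (@chain_decomp _ K y) => [|x /y_P[]//]; rewrite !linear_sum big1 // => s sK.
have [-> | /y_P[_ ps]] := eqVneq (y s) 0; first by rewrite scale0r !linear0.
by rewrite !linearZ /= (a_P sK ps).2 scaler0.
Qed.

Lemma Obar_limg n : Obar K W b n = (linfun E @: crit_space K W n)%VS.
Proof.
rewrite limg_span -map_comp; congr <<_>>%VS; apply/esym/eq_in_map => s.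
by rewrite mem_enum inE => /andP[sK _] /=; rewrite lfunE /= linext_elem.
Qed.

Lemma ObarP n y : y \in Obar K W b n <-> exists2 c, crit_of_dim K W n c & y = E c.
Proof.
rewrite Obar_limg; split=> [/memv_imgP[c /crit_spaceP c_crit ->] | [c c_crit ->]].
  by exists c; rewrite ?lfunE.
by rewrite -lfunE memv_img //; apply/crit_spaceP.
Qed.

Lemma incidence_ext_fixed d : E (A (D (E d))) = D (E d).
Proof. exact/extension_chainE/extension_chain_incidence/extension_chain_ext. Qed.

Theorem extension_quot_iso n m :
  quot_iso (Obar K W b n :&: lker (linfun D)) (linfun D @: Obar K W b m)
    (crit_space K W n :&: lker (linfun (A \o D))) (linfun (A \o D) @: crit_space K W m).
Proof.
exists (linfun A); split; apply/subvP.
- move=> y /memv_imgP[x /memv_capP[/ObarP[c c_crit ->]]].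
  rewrite memv_ker !lfunE /= => /eqP DEc ->.
  rewrite (ref_extK c_crit) memv_cap; apply/andP; split; first exact/crit_spaceP.
  by rewrite memv_ker lfunE /= -(ref_incidence_ext c_crit) DEc linear0.
- move=> _ /memv_imgP[_ /memv_imgP[x /ObarP[d d_crit ->] ->] ->].
  apply/memv_imgP; exists d; first exact/crit_spaceP.
  by rewrite !lfunE /= (ref_incidence_ext d_crit).
- move=> x /memv_capP[/memv_capP[/ObarP[c c_crit ->] _]].
  rewrite -memv_preim => /memv_imgP[d /crit_spaceP d_crit].
  rewrite !lfunE /= (ref_extK c_crit) => ->.
  apply/memv_imgP; exists (E d); first by apply/ObarP; exists d.
  by rewrite lfunE /= -(ref_incidence_ext d_crit) incidence_ext_fixed.
- move=> c /memv_capP[/crit_spaceP c_crit]; rewrite memv_ker lfunE /= => /eqP ADc.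
  apply: (subvP (addvSl _ _)); apply/memv_imgP; exists (E c).
    rewrite memv_cap memv_ker lfunE /= -incidence_ext_fixed.
    by rewrite (ref_incidence_ext c_crit) ADc linear0 eqxx andbT; apply/ObarP; exists c.
  by rewrite lfunE /= (ref_extK c_crit).
Qed.

End ExtensionIsomorphism.

Section Complexes.
Variable V : finType.
Implicit Types (K : {set {set V}}) (s t u L H : {set V}).

Definition bd_rel K : rel {set V} := fun t s => t \in bd_set K s.
Definition cobd_rel K : rel {set V} := fun t s => t \in cobd_set K s.

Lemma bd_rel_dom K t s : bd_rel K t s -> t \in K.
Proof. by rewrite /bd_rel inE => /andP[]. Qed.

Lemma cobd_rel_dom K t s : cobd_rel K t s -> t \in K.
Proof. by rewrite /cobd_rel inE => /andP[]. Qed.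

Lemma cobd_relE K t s : t \in K -> s \in K -> cobd_rel K t s = bd_rel K s t.
Proof. by move=> tK sK; rewrite /cobd_rel /bd_rel !inE tK sK. Qed.

Lemma bd_relE K t s : t \in K -> s \in K -> bd_rel K t s = cobd_rel K s t.
Proof. by move=> tK sK; rewrite cobd_relE. Qed.

Lemma free_pair_card K s t : is_complex K -> s \proper t -> t \in K ->
  (forall u, u \in K -> s \subset u -> u = s \/ u = t) -> #|s|.+1 = #|t|.
Proof.
move=> [_ K_closed] st tK free_st; case/properP: (st) => st_sub [v vt vNs].
have vs_t : v |: s \subset t by rewrite subUset sub1set vt st_sub.
have vsK : v |: s \in K.
  by apply: K_closed tK vs_t _; apply/set0Pn; exists v; exact: setU11.
case: (free_st _ vsK (subsetUr _ _)) => [vs_s | <-]; last by rewrite cardsU1 vNs.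
by move: (setU11 v s); rewrite vs_s (negbTE vNs).
Qed.

Lemma card_codim2_faces K L H : is_complex K -> L \in K -> H \in K ->
  ~~ odd #|[set t in K | bd_rel K L t && bd_rel K t H]|.
Proof.
move=> [_ K_closed] LK HK; set S := [set t in K | _].
have memS t : (t \in S) =
    [&& t \in K, L \proper t, #|L|.+1 == #|t|, t \proper H & #|t|.+1 == #|H|].
  by rewrite !inE /bd_rel !inE LK; case: (t \in K); rewrite //= -!andbA.
have [-> | [t0]] := set_0Vmem S; first by rewrite cards0.
rewrite memS => /and5P[_ Lt0 /eqP cLt0 t0H /eqP ct0H].
have LH : L \subset H by apply: subset_trans (proper_sub Lt0) (proper_sub t0H).
have -> : S = (fun z => z |: L) @: (H :\: L).
  apply/setP => t; rewrite memS; apply/and5P/imsetP.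
    case=> tK Lt /eqP cLt tH _.
    have /cards1P[z tLz] : #|t :\: L| == 1%N.
      by rewrite cardsD (setIidPr (proper_sub Lt)) -cLt subSnn.
    have : z \in t :\: L by rewrite tLz set11.
    rewrite !inE => /andP[zNL zt]; exists z.
      by rewrite !inE zNL (subsetP (proper_sub tH)).
    by rewrite -{1}(setID t L) (setIidPr (proper_sub Lt)) tLz setUC.
  case=> z; rewrite inE => /andP[zNL zH] ->.
  have zL_H : z |: L \subset H by rewrite subUset sub1set zH LH.
  have czL : #|z |: L| = #|L|.+1 by rewrite cardsU1 zNL.
  split.
  - by apply: K_closed HK zL_H _; apply/set0Pn; exists z; exact: setU11.
  - by rewrite properEcard subsetUr czL ltnSn.
  - by rewrite czL.
  - by rewrite properEcard zL_H czL -ct0H -cLt0 ltnSn.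
  - by rewrite czL -ct0H -cLt0.
rewrite card_in_imset => [|z1 z2].
  by rewrite cardsD (setIidPr LH) -ct0H -cLt0 -addn2 addKn.
rewrite !inE => /andP[z1L _] /andP[z2L _] z12.
have /setU1P[] // : z1 \in z2 |: L by rewrite -z12 setU11.
by move=> z1L'; rewrite z1L' in z1L.
Qed.

Lemma incidence_bd_sq0 K : is_complex K ->
  forall c, incidence K (bd_rel K) (incidence K (bd_rel K) c) = 0.
Proof.
move=> K_complex; apply: incidence_sq0 => u s sK.
have [uK | uNK] := boolP (u \in K); first exact: card_codim2_faces.
rewrite (_ : [set t in K | _] = set0) ?cards0 //; apply/setP => t.
by rewrite !inE /bd_rel /cobd_rel !inE (negbTE uNK) /= andbF.
Qed.

Lemma incidence_cobd_sq0 K : is_complex K ->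
  forall c, incidence K (cobd_rel K) (incidence K (cobd_rel K) c) = 0.
Proof.
move=> K_complex; apply: incidence_sq0 => u s sK.
have [uK | uNK] := boolP (u \in K); last first.
  rewrite (_ : [set t in K | _] = set0) ?cards0 //; apply/setP => t.
  by rewrite !inE /bd_rel /cobd_rel !inE (negbTE uNK) /= andbF.
rewrite (eq_card (_ : _ =i [set t in K | bd_rel K s t && bd_rel K t u])).
  exact: card_codim2_faces.
by move=> t; rewrite !inE; case tK: (t \in K); rewrite //= !cobd_relE // andbC.
Qed.

End Complexes.

Section MorseSequence.
Variables (V : finType) (K : {set {set V}}) (W : seq (step V)).
Hypothesis K_complex : is_complex K.
Hypothesis W_morse : morse_seq K W.

Local Notation Wn i := (nth (Fill set0) W i).
Local Notation Ks i := (Kstage W i).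

Lemma Kstage_mono i j : (i <= j)%N -> Ks i \subset Ks j.
Proof.
move=> ij; rewrite /Kstage -(take_takel W ij) -{2}(cat_take_drop i (take j W)).
by rewrite big_cat subsetUl.
Qed.

Lemma Kstage_sub i : Ks i \subset K.
Proof.
case: W_morse => _ <-; rewrite /Kstage take_size -{2}(cat_take_drop i W).
by rewrite big_cat subsetUl.
Qed.

Lemma mem_added_step s : s \in K -> exists2 i, (i < size W)%N & s \in added (Wn i).
Proof.
case: W_morse => _ <-; rewrite /Kstage take_size (big_nth (Fill set0)) big_mkord.
by case/bigcupP => i _ sWi; exists i.
Qed.

Lemma exp_step_regular i s t : (i < size W)%N -> Wn i = Exp s t ->
  lower_regular W s /\ upper_regular W t.
Proof. by move=> iW Wi; split; apply/(has_nthP (Fill set0)); exists i; rewrite ?Wi. Qed.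

Lemma noncritical_regular s :
  s \in K -> ~~ critical W s -> lower_regular W s || upper_regular W s.
Proof.
case/mem_added_step => i iW; case Wi: (Wn i) => [nu | s' t'] /=.
  by rewrite inE => /eqP -> /negP[]; apply/(has_nthP (Fill set0)); exists i; rewrite ?Wi.
have [ls' ut'] := exp_step_regular iW Wi.
by rewrite !inE => /orP[] /eqP -> _; rewrite ?ls' ?ut' ?orbT.
Qed.

Lemma upper_regular_step t :
  upper_regular W t -> exists2 i, (i < size W)%N & exists s, Wn i = Exp s t.
Proof.
case/(has_nthP (Fill set0)) => i iW; case Wi: (Wn i) => [// | s t'] /eqP <-.
by exists i => //; exists s.
Qed.

Lemma lower_regular_step s :
  lower_regular W s -> exists2 i, (i < size W)%N & exists t, Wn i = Exp s t.
Proof.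
case/(has_nthP (Fill set0)) => i iW; case Wi: (Wn i) => [// | s' t] /eqP <-.
by exists i => //; exists t.
Qed.

Lemma exp_step_valid i s t : (i < size W)%N -> Wn i = Exp s t ->
  [/\ is_complex (Ks i.+1), s \proper t, s \notin Ks i,
      Ks i.+1 = s |: (t |: Ks i) &
      forall u, u \in Ks i.+1 -> s \subset u -> u = s \/ u = t].
Proof.
by move=> iW Wi; case: W_morse => /(_ i iW); rewrite Wi => -[? [? [? [_ []]]]].
Qed.

Lemma upper_regular_chain_eq0 (y : chain V) :
  (forall x, y x != 0 -> upper_regular W x) ->
  (forall x, lower_regular W x -> incidence K (bd_rel K) y x = 0) -> y = 0.
Proof.
move=> y_upper Dy_lower; apply/ffunP => x0; rewrite ffunE; apply/eqP/negPn/negP => yx0.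
pose last_step j := (j < size W)%N && (if Wn j is Exp _ t then y t != 0 else false).
have ex_j : exists j, last_step j.
  have [j jW [s Wj]] := upper_regular_step (y_upper _ yx0).
  by exists j; rewrite /last_step jW Wj.
have j_bounded j : last_step j -> (j <= size W)%N by case/andP => /ltnW.
have [j /andP[jW]] := ex_maxnP ex_j j_bounded.
case Wj: (Wn j) => [// | s t] yt j_max.
have [Kj_complex st _ Kj1 free_st] := exp_step_valid jW Wj.
have [sKj tKj] : s \in Ks j.+1 /\ t \in Ks j.+1 by rewrite Kj1 !inE !eqxx orbT.
have [ls _] := exp_step_regular jW Wj.
suff : incidence K (bd_rel K) y s = y t.
  by rewrite Dy_lower // => /esym/eqP; rewrite (negbTE yt).
(* (s, t) is free in K_(j+1), which contains the support of y by maximality of j. *)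
apply: incidence_single => [||u _].
- exact: subsetP (Kstage_sub _) _ tKj.
- rewrite /bd_rel inE (subsetP (Kstage_sub _) _ sKj) st /=.
  by rewrite (free_pair_card Kj_complex st tKj free_st).
rewrite /bd_rel inE => /and3P[_ su _] yu.
have [k kW [s' Wk]] := upper_regular_step (y_upper _ yu).
have kj : (k <= j)%N by apply: j_max; rewrite /last_step kW Wk.
have [_ _ _ Kk1 _] := exp_step_valid kW Wk.
have uKj : u \in Ks j.+1.
  by apply: subsetP (Kstage_mono (kj : (k.+1 <= j.+1)%N)) _ _; rewrite Kk1 !inE eqxx orbT.
case: (free_st u uKj (proper_sub su)) => // us.
by rewrite us properxx in su.
Qed.

Lemma lower_regular_chain_eq0 (y : chain V) :
  (forall x, y x != 0 -> lower_regular W x) ->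
  (forall x, upper_regular W x -> incidence K (cobd_rel K) y x = 0) -> y = 0.
Proof.
move=> y_lower Dy_upper; apply/ffunP => x0; rewrite ffunE; apply/eqP/negPn/negP => yx0.
pose first_step j := (j < size W)%N && (if Wn j is Exp s _ then y s != 0 else false).
have ex_j : exists j, first_step j.
  have [j jW [t Wj]] := lower_regular_step (y_lower _ yx0).
  by exists j; rewrite /first_step jW Wj.
have [j /andP[jW]] := ex_minnP ex_j.
case Wj: (Wn j) => [// | s t] ys j_min.
have [Kj_complex st _ Kj1 free_st] := exp_step_valid jW Wj.
have [sKj tKj] : s \in Ks j.+1 /\ t \in Ks j.+1 by rewrite Kj1 !inE !eqxx orbT.
have [_ ut] := exp_step_regular jW Wj.
suff : incidence K (cobd_rel K) y t = y s.
  by rewrite Dy_upper // => /esym/eqP; rewrite (negbTE ys).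
(* The faces of t lie in K_(j+1), which by minimality of j meets the support of y
   only in s. *)
apply: incidence_single => [||u uK].
- exact: subsetP (Kstage_sub _) _ sKj.
- rewrite /cobd_rel inE (subsetP (Kstage_sub _) _ tKj) st /=.
  by rewrite (free_pair_card Kj_complex st tKj free_st).
rewrite /cobd_rel inE => /and3P[_ ut' _] yu.
have [k kW [t' Wk]] := lower_regular_step (y_lower _ yu).
have jk : (j <= k)%N by apply: j_min; rewrite /first_step kW Wk.
have [_ _ uNKk _ _] := exp_step_valid kW Wk.
have uKj : u \in Ks j.+1.
  case: Kj_complex => _ Kj_closed; apply: Kj_closed tKj (proper_sub ut') _.
  by apply: contraTneq uK => ->; case: K_complex.
move: jk; rewrite leq_eqVlt => /orP[/eqP jk | jk].
  by move: Wk; rewrite -jk Wj => -[->].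
by rewrite (subsetP (Kstage_mono jk) _ uKj) in uNKk.
Qed.

End MorseSequence.

Theorem theorem11 (V : finType) (K : {set {set V}}) (W : seq (step V))
  (ref cor : {set V} -> chain V) :
  is_complex K -> morse_seq K W ->
  is_reference K W ref -> is_coreference K W cor ->
  forall p : nat,
    quot_iso (Zext K W cor p) (Bext K W cor p) (Zcrit K W ref p) (Bcrit K W ref p) /\
    quot_iso (Zcoext K W ref p) (Bcoext K W ref p)
             (Zcocrit K W cor p) (Bcocrit K W cor p).
Proof.
move=> K_complex W_morse [ref_dim ref_crit ref_upper] [cor_dim cor_crit cor_lower] p.
have noncritical_upper_lower s :
    s \in K -> ~~ critical W s -> upper_regular W s || lower_regular W s.
  by move=> sK /(noncritical_regular W_morse sK); rewrite orbC.
split.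
- exact: (extension_quot_iso (@bd_rel_dom _ K) (@cobd_relE _ K) noncritical_upper_lower
    ref_dim ref_crit ref_upper cor_crit cor_lower (incidence_bd_sq0 K_complex)
    (upper_regular_chain_eq0 W_morse)).
- exact: (extension_quot_iso (@cobd_rel_dom _ K) (@bd_relE _ K)
    (noncritical_regular W_morse) cor_dim cor_crit cor_lower ref_crit ref_upper
    (incidence_cobd_sq0 K_complex) (lower_regular_chain_eq0 K_complex W_morse)).
Qed.
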